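(* Let $\phi\colon\Gamma\to X$ be a partial flow on a metric space $X$. Let $U\subset X$ be a $\phi$-convex open set with compact closure, and let $\psi=\phi|U$ be the restriction of $\phi$ to $U$. Then the enveloping space $U^e$ of $\psi$ is metrizable.
   Context: A partial flow on a metric space $X$ is a continuous map $\phi\colon\Gamma\to X$ on an open set $\Gamma\subset\mathbb{R}\times X$. It satisfies: $\Gamma_x=\{t:(t,x)\in\Gamma\}$ is a connected set containing $0$; $\Gamma_{\phi_t(x)}=\Gamma_x-t$; $\phi_0=\mathrm{id}$; and $\phi_s\phi_t(x)=\phi_{s+t}(x)$ whenever $s,t,s+t\in\Gamma_x$. Let $J(t)=[0,t]$ if $t\ge0$ and $J(t)=[t,0]$ if $t<0$. For open $U\subset X$, the restriction $\psi=\phi|U$ is the partial flow on $U$ with domain $\Gamma_U=\{(t,x): x\in U,\ J(t)\subset\Gamma_x,\ \phi_{J(t)}(x)\subset U\}$ and $\psi_t(x)=\phi_t(x)$. An open set $U$ is $\phi$-convex if, whenever $t\ge0$, $x\in U$, $\phi_t(x)\in U$ and $\phi_{[0,t]}(x)\subset\overline U$, we have $\phi_{[0,t]}(x)\subset U$. The enveloping space of a partial flow $\psi$ on $U$ is the quotient $U^e=(\mathbb{R}\times U)/\!\sim$ with the quotient topology. Here $\sim$ is the equivalence relation generated by $(r,x)\sim(s,y)$ when $r-s\in\Gamma^\psi_x$ and $y=\psi_{r-s}(x)$. The enveloping flow is induced on $U^e$ by $(s,x)\mapsto(s+t,x)$. *)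

From Stdlib Require Import Reals Lra List Relations.
Open Scope R_scope.

Record MetricSpace := {
  carrier :> Type;
  dist : carrier -> carrier -> R;
  dist_eq0 : forall x y, dist x y = 0 <-> x = y;
  dist_sym : forall x y, dist x y = dist y x;
  dist_tri : forall x y z, dist x z <= dist x y + dist y z
}.

Definition is_metric {T : Type} (d : T -> T -> R) : Prop :=
  (forall x y, d x y = 0 <-> x = y) /\
  (forall x y, d x y = d y x) /\
  (forall x y z, d x z <= d x y + d y z).

Definition metric_open {T : Type} (d : T -> T -> R) (W : T -> Prop) : Prop :=
  forall x, W x -> exists eps, 0 < eps /\ forall y, d x y < eps -> W y.

Definition mopen {X : MetricSpace} (W : X -> Prop) : Prop := metric_open (dist X) W.

Definition mclosure {X : MetricSpace} (U : X -> Prop) (x : X) : Prop :=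
  forall eps, 0 < eps -> exists y, U y /\ dist X x y < eps.

Definition mcompact {X : MetricSpace} (K : X -> Prop) : Prop :=
  forall (I : Type) (O : I -> X -> Prop),
    (forall i, mopen (O i)) ->
    (forall x, K x -> exists i, O i x) ->
    exists l : list I, forall x, K x -> exists i, In i l /\ O i x.

Definition open_RX {X : MetricSpace} (G : R -> X -> Prop) : Prop :=
  forall t x, G t x -> exists eps, 0 < eps /\
    forall s y, Rabs (s - t) < eps -> dist X x y < eps -> G s y.

(** Partial flow: Gamma is the domain (open in R x X), phi t x is the flow,
    its values outside Gamma being irrelevant. *)
Definition partial_flow {X : MetricSpace} (Gamma : R -> X -> Prop)
  (phi : R -> X -> X) : Prop :=
  open_RX Gamma /\
  (forall t x, Gamma t x -> forall eps, 0 < eps -> exists delta, 0 < delta /\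
     forall s y, Gamma s y -> Rabs (s - t) < delta -> dist X x y < delta ->
       dist X (phi t x) (phi s y) < eps) /\
  (forall x, Gamma 0 x) /\
  (forall x s t u, Gamma s x -> Gamma t x -> s <= u <= t -> Gamma u x) /\
  (forall t x, Gamma t x -> forall s, Gamma s (phi t x) <-> Gamma (s + t) x) /\
  (forall x, phi 0 x = x) /\
  (forall s t x, Gamma s x -> Gamma t x -> Gamma (s + t) x ->
     phi s (phi t x) = phi (s + t) x).

Definition J (t s : R) : Prop := if Rle_dec 0 t then 0 <= s <= t else t <= s <= 0.

Definition phi_convex {X : MetricSpace} (Gamma : R -> X -> Prop)
  (phi : R -> X -> X) (U : X -> Prop) : Prop :=
  forall t x, 0 <= t -> U x -> Gamma t x -> U (phi t x) ->
    (forall s, 0 <= s <= t -> mclosure U (phi s x)) ->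
    forall s, 0 <= s <= t -> U (phi s x).

Definition sub {X : MetricSpace} (U : X -> Prop) : Type := {x : X | U x}.

(** Domain of the restriction psi = phi|U *)
Definition GammaU {X : MetricSpace} (Gamma : R -> X -> Prop)
  (phi : R -> X -> X) (U : X -> Prop) (t : R) (x : X) : Prop :=
  U x /\ forall s, J t s -> Gamma s x /\ U (phi s x).

Definition env_gen {X : MetricSpace} (Gamma : R -> X -> Prop)
  (phi : R -> X -> X) (U : X -> Prop) (p q : R * sub U) : Prop :=
  GammaU Gamma phi U (fst p - fst q) (proj1_sig (snd p)) /\
  proj1_sig (snd q) = phi (fst p - fst q) (proj1_sig (snd p)).

Definition env_equiv {X : MetricSpace} (Gamma : R -> X -> Prop)
  (phi : R -> X -> X) (U : X -> Prop) : relation (R * sub U) :=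
  clos_refl_sym_trans _ (env_gen Gamma phi U).

Definition Ue {X : MetricSpace} (Gamma : R -> X -> Prop)
  (phi : R -> X -> X) (U : X -> Prop) : Type :=
  { C : R * sub U -> Prop | exists p, C = env_equiv Gamma phi U p }.

Definition env_cls {X : MetricSpace} (Gamma : R -> X -> Prop)
  (phi : R -> X -> X) (U : X -> Prop) (p : R * sub U) : Ue Gamma phi U :=
  exist _ (env_equiv Gamma phi U p) (ex_intro _ p eq_refl).

Definition open_RU {X : MetricSpace} (U : X -> Prop) (W : R * sub U -> Prop) : Prop :=
  forall p, W p -> exists eps, 0 < eps /\ forall q,
    Rabs (fst q - fst p) < eps ->
    dist X (proj1_sig (snd p)) (proj1_sig (snd q)) < eps -> W q.

Definition Ue_open {X : MetricSpace} (Gamma : R -> X -> Prop)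
  (phi : R -> X -> X) (U : X -> Prop) (W : Ue Gamma phi U -> Prop) : Prop :=
  open_RU U (fun p => W (env_cls Gamma phi U p)).

Definition Ue_metrizable {X : MetricSpace} (Gamma : R -> X -> Prop)
  (phi : R -> X -> X) (U : X -> Prop) : Prop :=
  exists d : Ue Gamma phi U -> Ue Gamma phi U -> R,
    is_metric d /\ forall W, Ue_open Gamma phi U W <-> metric_open d W.

From Pilot Require Import Defs.
From Stdlib Require Import Reals Lra List Relations Classical ClassicalEpsilon
  FunctionalExtensionality PropExtensionality ProofIrrelevance.
Open Scope R_scope.

(* Because phi is a partial flow, the generating relation of ~ is already an
   equivalence, so the class of (a, x) meets each time slice {b} x U in at most the
   point psi_(a-b)(x). A class is therefore determined by its slices, valued in
   U + {oo} with oo the collapsed complement of U, and the metric is the sup over b of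
   the slice distances weighted by 1 / (1 + |b|).
   A metric ball around the class of (a, x) is a quotient neighbourhood since x has
   positive depth in U, so nearby classes have their time-a slice near x. Conversely,
   metric balls are quotient-open because (t, y) |-> psi_t(y) in U + {oo} is continuous
   on R x U, uniformly for t in compact sets. Convexity and compactness enter here:
   if psi_t(x) is undefined, either the phi-orbit of x leaves the closure of U before
   time t, which persists near (t, x), or it stays in the closure; then compactness
   yields a uniform flow time near the closure, so phi_s(x) exists for all s up to t,
   and convexity forces phi_t(x) out of U, so psi_t(y) is near oo for (t, y) near
   (t, x). *)

Ltac split_min_max_abs :=
  unfold Rmin, Rmax, Rabs in *;
  repeat match goal with
  | |- context [Rle_dec ?a ?b] => destruct (Rle_dec a b)
  | H : context [Rle_dec ?a ?b] |- _ => destruct (Rle_dec a b)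
  | |- context [Rcase_abs ?a] => destruct (Rcase_abs a)
  | H : context [Rcase_abs ?a] |- _ => destruct (Rcase_abs a)
  end.

Lemma list_pos_lower_bound {A : Type} (l : list A) (g : A -> R) :
  (forall a, In a l -> 0 < g a) -> exists d, 0 < d /\ forall a, In a l -> d <= g a.
Proof.
  induction l as [|a l IH]; intros Hpos.
  - exists 1; split; [lra | intros a []].
  - destruct IH as [d [Hd Hle]]; [intros b Hb; apply Hpos; right; exact Hb |].
    exists (Rmin d (g a)); split.
    + apply Rmin_glb_lt; [lra | apply Hpos; left; reflexivity].
    + intros b [<- | Hb]; [apply Rmin_r |].
      eapply Rle_trans; [apply Rmin_l | auto].
Qed.

Lemma lebesgue_number (A B : R) (P : R -> R -> Prop) :
  (forall t, A <= t <= B -> exists r, 0 < r /\ P t r) ->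
  exists d, 0 < d /\ forall u, A <= u <= B ->
    exists t r, P t r /\ Rabs (u - t) + d < r.
Proof.
  intros HP.
  assert (HP' : forall t, exists r, 0 < r /\ (A <= t <= B -> P t r)).
  { intros t; destruct (classic (A <= t <= B)) as [Ht | Ht].
    - destruct (HP t Ht) as [r [Hr Htr]]; exists r; auto.
    - exists 1; split; [lra | tauto]. }
  destruct (choice _ HP') as [r Hr].
  assert (Hcl : forall t, (exists u, A <= t <= B /\ Rabs (u - t) < r t / 2) -> A <= t <= B).
  { intros t [u [Ht _]]; exact Ht. }
  set (balls := mkfamily (fun t => A <= t <= B)
                  (fun t u => A <= t <= B /\ Rabs (u - t) < r t / 2) Hcl).
  destruct (compact_P3 A B balls) as [D [Hcov [l Hl]]].
  - split.
    + intros u Hu; exists u; simpl; split; [exact Hu |].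
      rewrite Rminus_diag, Rabs_R0; destruct (Hr u); lra.
    + intros t u [Ht Hu].
      assert (Hgap : 0 < r t / 2 - Rabs (u - t)) by lra.
      exists (mkposreal _ Hgap); intros v Hv; unfold disc in Hv; simpl in *.
      split; [exact Ht |].
      pose proof (Rabs_triang (v - u) (u - t)) as Htri.
      replace (v - u + (u - t)) with (v - t) in Htri by ring; lra.
  - destruct (list_pos_lower_bound l (fun t => r t / 2)) as [d [Hd Hdl]].
    { intros t _; destruct (Hr t); lra. }
    exists d; split; [exact Hd |].
    intros u Hu; destruct (Hcov u Hu) as [t [[Ht Hut] HtD]].
    exists t, (r t); split; [apply Hr, Ht |].
    assert (d <= r t / 2) by (apply Hdl, Hl; split; assumption); lra.
Qed.

Lemma step_induction (e : R) (P : R -> Prop) :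
  0 < e -> P 0 ->
  (forall s u, (0 <= u <= s \/ s <= u <= 0) -> Rabs u <= e -> P (s - u) -> P s) ->
  forall s, P s.
Proof.
  intros He P0 Hstep.
  assert (Hn : forall n s, Rabs s <= INR n * e -> P s).
  { induction n as [|n IH]; intros s Hs.
    - simpl in Hs; replace s with 0 by (split_min_max_abs; lra); exact P0.
    - rewrite S_INR in Hs.
      destruct (Rle_dec (Rabs s) e) as [Hse | Hse].
      + apply (Hstep s s); [split_min_max_abs; lra | exact Hse |].
        rewrite Rminus_diag; exact P0.
      + set (u := if Rle_dec 0 s then e else - e).
        apply (Hstep s u); unfold u; destruct (Rle_dec 0 s);
          try apply IH; split_min_max_abs; lra. }
  intros s; destruct (INR_archimed e (Rabs s) He) as [n Hn'].
  apply (Hn n); lra.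
Qed.

Lemma cone_triangle_real h1 h2 h3 d12 d23 d13 :
  0 <= h1 -> 0 <= h2 -> 0 <= h3 -> 0 <= d12 -> 0 <= d23 -> d13 <= d12 + d23 ->
  Rabs (h1 - h3) + Rmin (Rmin h1 h3) d13 <=
  (Rabs (h1 - h2) + Rmin (Rmin h1 h2) d12) + (Rabs (h2 - h3) + Rmin (Rmin h2 h3) d23).
Proof.
  intros.
  assert (Hm1 : Rmin (Rmin h1 h3) d13 <= h1)
    by (eapply Rle_trans; [apply Rmin_l | apply Rmin_l]).
  assert (Hm3 : Rmin (Rmin h1 h3) d13 <= h3)
    by (eapply Rle_trans; [apply Rmin_l | apply Rmin_r]).
  assert (Hmd : Rmin (Rmin h1 h3) d13 <= d13) by apply Rmin_r.
  revert Hm1 Hm3 Hmd; generalize (Rmin (Rmin h1 h3) d13); intros m Hm1 Hm3 Hmd.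
  split_min_max_abs; lra.
Qed.

Section MetricFacts.
Variable X : MetricSpace.

Lemma dist_xx (x : X) : Defs.dist X x x = 0.
Proof. apply Defs.dist_eq0; reflexivity. Qed.

Lemma dist_nonneg (x y : X) : 0 <= Defs.dist X x y.
Proof.
  pose proof (Defs.dist_tri X x y x) as Htri.
  rewrite dist_xx, (Defs.dist_sym X y x) in Htri; lra.
Qed.

Lemma not_mclosure_gap (U : X -> Prop) x :
  ~ mclosure U x -> exists eta, 0 < eta /\ forall z, U z -> eta <= Defs.dist X x z.
Proof.
  intros Hx; apply NNPP; intros Hno; apply Hx; intros e He.
  apply NNPP; intros Hfar; apply Hno; exists e; split; [exact He |].
  intros z Hz; apply Rnot_lt_le; intros Hlt; apply Hfar; exists z; auto.
Qed.

End MetricFacts.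

Section Depth.
Variables (X : MetricSpace) (U : X -> Prop).

Definition inner_radius (x : X) (r : R) : Prop :=
  0 <= r <= 1 /\ forall y, Defs.dist X x y < r -> U y.

Lemma inner_radius_bound x : bound (inner_radius x).
Proof. exists 1; intros r [Hr _]; lra. Qed.

Lemma inner_radius_0 x : inner_radius x 0.
Proof. split; [lra |]; intros y Hy; pose proof (dist_nonneg X x y); lra. Qed.

(* [depth x] is [min 1 (distance from x to the complement of U)]. *)
Definition depth (x : X) : R :=
  proj1_sig (completeness (inner_radius x) (inner_radius_bound x)
               (ex_intro _ 0 (inner_radius_0 x))).

Lemma depth_lub x : is_lub (inner_radius x) (depth x).
Proof. unfold depth; destruct completeness; simpl; auto. Qed.

Lemma depth_bounds x : 0 <= depth x <= 1.
Proof.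
  destruct (depth_lub x) as [Hub Hleast]; split.
  - apply Hub, inner_radius_0.
  - apply Hleast; intros r [Hr _]; lra.
Qed.

Lemma depth_pos x : mopen U -> U x -> 0 < depth x.
Proof.
  intros HUo Hx; destruct (HUo x Hx) as [e [He Hball]].
  assert (Hm : 0 < Rmin e 1) by (apply Rmin_glb_lt; lra).
  assert (Hr : inner_radius x (Rmin e 1)).
  { split; [split; [lra | apply Rmin_r] |].
    intros y Hy; apply Hball; eapply Rlt_le_trans; [exact Hy | apply Rmin_l]. }
  apply (proj1 (depth_lub x)) in Hr; lra.
Qed.

Lemma depth_pos_in x : 0 < depth x -> U x.
Proof.
  intros Hpos; apply NNPP; intros Hx.
  assert (depth x <= 0); [| lra].
  apply (proj2 (depth_lub x)); intros r [Hr Hball].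
  apply Rnot_lt_le; intros Hr0; apply Hx, Hball; rewrite dist_xx; lra.
Qed.

Lemma depth_le_add_dist x y : depth x <= depth y + Defs.dist X x y.
Proof.
  apply (proj2 (depth_lub x)); intros r [Hr Hball].
  destruct (Rle_dec r (Defs.dist X x y)) as [Hle | Hlt];
    [pose proof (depth_bounds y); lra |].
  assert (Hy : inner_radius y (r - Defs.dist X x y)).
  { split; [pose proof (dist_nonneg X x y); lra |].
    intros z Hz; apply Hball; pose proof (Defs.dist_tri X x y z); lra. }
  apply (proj1 (depth_lub y)) in Hy; lra.
Qed.

Lemma depth_lipschitz x y : Rabs (depth x - depth y) <= Defs.dist X x y.
Proof.
  pose proof (depth_le_add_dist x y); pose proof (depth_le_add_dist y x).
  rewrite (Defs.dist_sym X y x) in *; split_min_max_abs; lra.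
Qed.

End Depth.

Section ConeDist.
Variables (Y : MetricSpace) (h : Y -> R).
Hypothesis h_bounds : forall y, 0 <= h y <= 1.

(* For [h] the depth in [U], [None] is the complement of [U] collapsed to a point,
   and points near the boundary are near [None]. This is only a pseudometric:
   distinct points with [h = 0] are at distance [0]. *)
Definition cone_dist (o o' : option Y) : R :=
  match o, o' with
  | Some x, Some y => Rabs (h x - h y) + Rmin (Rmin (h x) (h y)) (Defs.dist Y x y)
  | Some x, None | None, Some x => h x
  | None, None => 0
  end.

Lemma cone_dist_nonneg o o' : 0 <= cone_dist o o'.
Proof.
  destruct o as [x|], o' as [y|]; simpl; try apply h_bounds; try lra.
  pose proof (h_bounds x); pose proof (h_bounds y); pose proof (dist_nonneg Y x y).
  split_min_max_abs; lra.
Qed.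

Lemma cone_dist_le_2 o o' : cone_dist o o' <= 2.
Proof.
  destruct o as [x|], o' as [y|]; simpl;
    try (pose proof (h_bounds x)); try (pose proof (h_bounds y)); split_min_max_abs; lra.
Qed.

Lemma cone_dist_sym o o' : cone_dist o o' = cone_dist o' o.
Proof.
  destruct o as [x|], o' as [y|]; simpl; auto.
  rewrite Rabs_minus_sym, Defs.dist_sym, (Rmin_comm (h x)); reflexivity.
Qed.

Lemma cone_dist_xx o : cone_dist o o = 0.
Proof.
  destruct o as [x|]; simpl; [| reflexivity].
  rewrite dist_xx, Rminus_diag, Rabs_R0; pose proof (h_bounds x).
  split_min_max_abs; lra.
Qed.

Lemma cone_dist_triangle o1 o2 o3 :
  cone_dist o1 o3 <= cone_dist o1 o2 + cone_dist o2 o3.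
Proof.
  pose proof (cone_dist_nonneg o1 o2); pose proof (cone_dist_nonneg o2 o3).
  destruct o1 as [x1|], o2 as [x2|], o3 as [x3|]; simpl in *;
    try (pose proof (h_bounds x1)); try (pose proof (h_bounds x2));
    try (pose proof (h_bounds x3)).
  - apply cone_triangle_real; try apply dist_nonneg; try apply h_bounds; apply Defs.dist_tri.
  - pose proof (dist_nonneg Y x1 x2); split_min_max_abs; lra.
  - split_min_max_abs; lra.
  - lra.
  - pose proof (dist_nonneg Y x2 x3); split_min_max_abs; lra.
  - lra.
  - lra.
  - lra.
Qed.

Lemma cone_dist_None_Some x : cone_dist None (Some x) = h x.
Proof. reflexivity. Qed.

Lemma cone_dist_Some_le (x y : Y) :
  Rabs (h x - h y) <= Defs.dist Y x y -> cone_dist (Some x) (Some y) <= 2 * Defs.dist Y x y.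
Proof. intros Hlip; simpl; pose proof (Rmin_r (Rmin (h x) (h y)) (Defs.dist Y x y)); lra. Qed.

Lemma cone_dist_Some_lt x o :
  cone_dist (Some x) o < h x / 2 ->
  exists y, o = Some y /\ Defs.dist Y x y <= cone_dist (Some x) o.
Proof.
  destruct o as [y|]; simpl; intros Hlt; [| pose proof (h_bounds x); lra].
  exists y; split; [reflexivity |].
  pose proof (h_bounds y); split_min_max_abs; lra.
Qed.

End ConeDist.

Definition weight (b : R) : R := / (1 + Rabs b).

Lemma weight_pos b : 0 < weight b.
Proof. unfold weight; apply Rinv_0_lt_compat; pose proof (Rabs_pos b); lra. Qed.

Lemma weight_le_1 b : weight b <= 1.
Proof.
  unfold weight; pose proof (Rabs_pos b); rewrite <- Rinv_1.
  apply Rinv_le_contravar; lra.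
Qed.

Lemma weight_lt b eps : 0 < eps -> / eps < Rabs b -> weight b < eps.
Proof.
  intros Heps Hb; unfold weight; pose proof (Rabs_pos b).
  rewrite <- (Rinv_inv eps); apply Rinv_lt_contravar; [| lra].
  apply Rmult_lt_0_compat; [apply Rinv_0_lt_compat |]; lra.
Qed.

Lemma J_iff t s : J t s <-> 0 <= s <= t \/ t <= s <= 0.
Proof. unfold J; destruct (Rle_dec 0 t); lra. Qed.

Lemma J_interval t s : J t s <-> Rmin 0 t <= s <= Rmax 0 t.
Proof. rewrite J_iff; split_min_max_abs; lra. Qed.

Lemma J_0 t : J t 0.
Proof. apply J_iff; lra. Qed.

Lemma J_self t : J t t.
Proof. apply J_iff; lra. Qed.

Lemma J_split s t r : J (s + t) r -> J t r \/ J s (r - t).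
Proof. rewrite !J_iff; lra. Qed.

Lemma J_clamp t t0 s : J t s -> exists s', J t0 s' /\ Rabs (s - s') <= Rabs (t - t0).
Proof.
  rewrite J_interval; intros Hs.
  destruct (Rle_dec (Rmin 0 t0) s), (Rle_dec s (Rmax 0 t0));
    [exists s | exists (Rmax 0 t0) | exists (Rmin 0 t0) | exists s];
    rewrite J_interval; split_min_max_abs; lra.
Qed.

Section PartialFlow.
Variables (X : MetricSpace) (Gamma : R -> X -> Prop) (phi : R -> X -> X).
Hypothesis PF : partial_flow Gamma phi.

Lemma flow_domain_open : open_RX Gamma.
Proof. apply PF. Qed.

Lemma flow_continuous t x : Gamma t x -> forall eps, 0 < eps -> exists delta, 0 < delta /\
  forall s y, Gamma s y -> Rabs (s - t) < delta -> Defs.dist X x y < delta ->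
    Defs.dist X (phi t x) (phi s y) < eps.
Proof. apply PF. Qed.

Lemma flow_domain_0 x : Gamma 0 x.
Proof. apply PF. Qed.

Lemma flow_domain_between x a b u :
  Gamma a x -> Gamma b x -> a <= u <= b \/ b <= u <= a -> Gamma u x.
Proof.
  destruct PF as (_ & _ & _ & Hint & _).
  intros Ha Hb [Hu | Hu]; [exact (Hint x a b u Ha Hb Hu) | exact (Hint x b a u Hb Ha Hu)].
Qed.

Lemma flow_domain_shift t x s : Gamma t x -> Gamma s (phi t x) <-> Gamma (s + t) x.
Proof. intros Ht; apply PF, Ht. Qed.

Lemma flow_0 x : phi 0 x = x.
Proof. apply PF. Qed.

Lemma flow_domain_near_0 x : exists e, 0 < e /\ forall s, Rabs s < e -> Gamma s x.
Proof.
  destruct (flow_domain_open 0 x (flow_domain_0 x)) as [e [He Hball]].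
  exists e; split; [exact He |]; intros s Hs.
  apply Hball; [rewrite Rminus_0_r; exact Hs | rewrite dist_xx; exact He].
Qed.

(* The axiom only gives [phi s (phi t x) = phi (s + t) x] when [s] itself lies in
   the domain at [x]; cutting [s] into steps that do removes that hypothesis. *)
Lemma flow_comp s t x : Gamma t x -> Gamma (s + t) x -> phi s (phi t x) = phi (s + t) x.
Proof.
  destruct PF as (_ & _ & _ & _ & _ & _ & Hadd).
  destruct (flow_domain_near_0 x) as [e0 [He0 Hsmall]].
  revert s t; refine (step_induction (e0 / 2) _ _ _ _); [lra | |].
  { intros t _ _; rewrite flow_0, Rplus_0_l; reflexivity. }
  intros s u Hu Hue IH t Ht Hst.
  assert (Gu : Gamma u x) by (apply Hsmall; lra).
  assert (Gut : Gamma (u + t) x) by (apply (flow_domain_between x t (s + t)); auto; lra).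
  assert (Gy : forall v, (0 <= v <= s \/ s <= v <= 0) -> Gamma v (phi t x)).
  { intros v Hv; apply flow_domain_shift; [exact Ht |].
    apply (flow_domain_between x t (s + t)); auto; lra. }
  assert (Hsplit : phi s (phi t x) = phi (s - u) (phi u (phi t x))).
  { rewrite (Hadd (s - u) u); [f_equal; ring | apply Gy; lra | apply Gy; lra |].
    replace (s - u + u) with s by ring; apply Gy; lra. }
  rewrite Hsplit, (Hadd u t x Gu Ht Gut), IH; [f_equal; ring | exact Gut |].
  replace (s - u + (u + t)) with (s + t) by ring; exact Hst.
Qed.

End PartialFlow.

Section Enveloping.
Variables (X : MetricSpace) (Gamma : R -> X -> Prop) (phi : R -> X -> X) (U : X -> Prop).
Hypothesis PF : partial_flow Gamma phi.

Local Notation GU := (GammaU Gamma phi U).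

Lemma GammaU_Gamma t x : GU t x -> Gamma t x.
Proof. intros [_ H]; apply (H t (J_self t)). Qed.

Lemma GammaU_U t x : GU t x -> U (phi t x).
Proof. intros [_ H]; apply (H t (J_self t)). Qed.

Lemma GammaU_0 x : U x -> GU 0 x.
Proof.
  intros Hx; split; [exact Hx |]; intros s Hs.
  replace s with 0 by (apply J_iff in Hs; lra).
  rewrite (flow_0 _ _ _ PF); split; [apply (flow_domain_0 _ _ _ PF) | exact Hx].
Qed.

Lemma GammaU_opp t x : GU t x -> GU (- t) (phi t x) /\ phi (- t) (phi t x) = x.
Proof.
  intros [Hx HJ]; destruct (HJ t (J_self t)) as [Gt Ut].
  assert (Hback : forall s, J (- t) s -> J t (s + t)) by (intros s; rewrite !J_iff; lra).
  split; [split; [exact Ut |] |].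
  - intros s Hs; destruct (HJ _ (Hback s Hs)) as [Gs Us]; split.
    + apply (flow_domain_shift _ _ _ PF); assumption.
    + rewrite (flow_comp _ _ _ PF); assumption.
  - rewrite (flow_comp _ _ _ PF), Rplus_opp_l, (flow_0 _ _ _ PF); auto.
    rewrite Rplus_opp_l; apply (flow_domain_0 _ _ _ PF).
Qed.

Lemma GammaU_add s t x :
  GU t x -> GU s (phi t x) -> GU (s + t) x /\ phi s (phi t x) = phi (s + t) x.
Proof.
  intros [Hx HJt] [_ HJs]; destruct (HJt t (J_self t)) as [Gt _].
  assert (Hdom : forall r, J s r -> Gamma (r + t) x /\ U (phi (r + t) x)).
  { intros r Hr; destruct (HJs r Hr) as [Gr Ur].
    apply (flow_domain_shift _ _ _ PF) in Gr; [| exact Gt].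
    rewrite (flow_comp _ _ _ PF) in Ur; auto. }
  split.
  - split; [exact Hx |]; intros r Hr.
    destruct (J_split _ _ _ Hr) as [Hrt | Hrs]; [apply HJt, Hrt |].
    replace r with (r - t + t) by ring; apply Hdom, Hrs.
  - apply (flow_comp _ _ _ PF); [exact Gt | apply Hdom, J_self].
Qed.

Lemma env_gen_refl p : env_gen Gamma phi U p p.
Proof.
  destruct p as [r [x Hx]]; unfold env_gen; simpl.
  rewrite Rminus_diag, (flow_0 _ _ _ PF); split; [apply GammaU_0, Hx | reflexivity].
Qed.

Lemma env_gen_sym p q : env_gen Gamma phi U p q -> env_gen Gamma phi U q p.
Proof.
  destruct p as [r [x Hx]], q as [s [y Hy]]; unfold env_gen; simpl.
  intros [Hg ->]; replace (s - r) with (- (r - s)) by ring.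
  destruct (GammaU_opp _ _ Hg); split; auto.
Qed.

Lemma env_gen_trans p q w :
  env_gen Gamma phi U p q -> env_gen Gamma phi U q w -> env_gen Gamma phi U p w.
Proof.
  destruct p as [r [x Hx]], q as [s [y Hy]], w as [u [z Hz]]; unfold env_gen; simpl.
  intros [Hg1 ->] [Hg2 ->]; replace (r - u) with (s - u + (r - s)) by ring.
  destruct (GammaU_add _ _ _ Hg1 Hg2) as [Hg Heq]; rewrite Heq; auto.
Qed.

Lemma env_equiv_gen p q : env_equiv Gamma phi U p q <-> env_gen Gamma phi U p q.
Proof.
  split; [| apply rst_step].
  induction 1; eauto using env_gen_refl, env_gen_sym, env_gen_trans.
Qed.

Hypothesis U_open : mopen U.

Local Notation UE := (Ue Gamma phi U).
Local Notation cls := (env_cls Gamma phi U).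
Local Notation cdist := (cone_dist X (depth X U)).

Definition psi (t : R) (x : X) : option X :=
  if excluded_middle_informative (GU t x) then Some (phi t x) else None.

Definition slice (C : UE) (b : R) : option X :=
  match excluded_middle_informative (exists y : sub U, proj1_sig C (b, y)) with
  | left H => Some (proj1_sig (proj1_sig (constructive_indefinite_description _ H)))
  | right _ => None
  end.

Lemma psi_Some t x : GU t x -> psi t x = Some (phi t x).
Proof. unfold psi; destruct excluded_middle_informative; [reflexivity | contradiction]. Qed.

Lemma psi_None t x : ~ GU t x -> psi t x = None.
Proof. unfold psi; destruct excluded_middle_informative; [contradiction | reflexivity]. Qed.

Lemma psi_0 x : U x -> psi 0 x = Some x.
Proof. intros Hx; rewrite psi_Some, (flow_0 _ _ _ PF); [reflexivity | apply GammaU_0, Hx]. Qed.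

Lemma slice_cls a x b : slice (cls (a, x)) b = psi (a - b) (proj1_sig x).
Proof.
  unfold slice; simpl; destruct excluded_middle_informative as [Hex | Hnex].
  - destruct constructive_indefinite_description as [y Hy]; simpl.
    apply env_equiv_gen in Hy; destruct Hy as [Hg Hy]; simpl in Hg, Hy.
    rewrite Hy, psi_Some; auto.
  - symmetry; apply psi_None; intros Hg; apply Hnex.
    exists (exist _ (phi (a - b) (proj1_sig x)) (GammaU_U _ _ Hg)).
    apply env_equiv_gen; split; auto.
Qed.

Lemma Ue_cls_surj (C : UE) : exists p, C = cls p.
Proof. destruct C as [P [p ->]]; exists p; reflexivity. Qed.

Lemma cls_eq p q : env_equiv Gamma phi U p q -> cls p = cls q.
Proof.
  intros Hpq; apply env_equiv_gen in Hpq; unfold env_cls.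
  apply subset_eq_compat, functional_extensionality; intros z.
  apply propositional_extensionality; rewrite !env_equiv_gen; split; intros Hz.
  - eapply env_gen_trans; [apply env_gen_sym, Hpq | exact Hz].
  - eapply env_gen_trans; [exact Hpq | exact Hz].
Qed.

Lemma cls_of_mem (C : UE) p : proj1_sig C p -> C = cls p.
Proof. intros Hp; destruct (Ue_cls_surj C) as [q ->]; apply cls_eq, Hp. Qed.

Lemma slice_Some C b x :
  slice C b = Some x -> exists y : sub U, proj1_sig y = x /\ C = cls (b, y).
Proof.
  unfold slice; destruct excluded_middle_informative as [Hex |]; [| discriminate].
  destruct constructive_indefinite_description as [y Hy]; simpl; intros [= <-].
  exists y; split; [reflexivity | apply cls_of_mem, Hy].
Qed.

(* The weight makes distant times matter little, so that metric balls only
   constrain a compact range of times, as quotient neighbourhoods do. *)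
Definition env_dist_values (C C' : UE) (v : R) : Prop :=
  exists b, v = weight b * cdist (slice C b) (slice C' b).

Lemma env_dist_values_bound C C' : bound (env_dist_values C C').
Proof.
  exists 2; intros v [b ->].
  pose proof (weight_pos b); pose proof (weight_le_1 b).
  pose proof (cone_dist_le_2 X _ (depth_bounds X U) (slice C b) (slice C' b)).
  pose proof (cone_dist_nonneg X _ (depth_bounds X U) (slice C b) (slice C' b)); nra.
Qed.

Definition env_dist (C C' : UE) : R :=
  proj1_sig (completeness (env_dist_values C C') (env_dist_values_bound C C')
               (ex_intro _ _ (ex_intro _ 0 eq_refl))).

Lemma env_dist_ge C C' b : weight b * cdist (slice C b) (slice C' b) <= env_dist C C'.
Proof. unfold env_dist; destruct completeness as [m [Hub Hleast]]; apply Hub; exists b; auto. Qed.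

Lemma env_dist_le C C' M :
  (forall b, weight b * cdist (slice C b) (slice C' b) <= M) -> env_dist C C' <= M.
Proof.
  intros HM; unfold env_dist; destruct completeness as [m [Hub Hleast]].
  apply Hleast; intros v [b Hv]; rewrite Hv; auto.
Qed.

Lemma env_dist_near_cls a (x : sub U) C :
  env_dist (cls (a, x)) C < weight a * (depth X U (proj1_sig x) / 2) ->
  exists y : sub U, C = cls (a, y) /\
    weight a * Defs.dist X (proj1_sig x) (proj1_sig y) <= env_dist (cls (a, x)) C.
Proof.
  intros Hlt; pose proof (weight_pos a) as Hw.
  pose proof (env_dist_ge (cls (a, x)) C a) as Hge.
  rewrite slice_cls, Rminus_diag, psi_0 in Hge by apply (proj2_sig x).
  destruct (cone_dist_Some_lt X _ (depth_bounds X U) (proj1_sig x) (slice C a))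
    as [y' [Hy' Hdist]].
  { apply (Rmult_lt_reg_l (weight a)); lra. }
  destruct (slice_Some _ _ _ Hy') as [y [<- ->]].
  exists y; split; [reflexivity |].
  eapply Rle_trans; [| exact Hge]; apply Rmult_le_compat_l; lra.
Qed.

Lemma env_dist_eq0 C C' : env_dist C C' = 0 -> C = C'.
Proof.
  intros H0; destruct (Ue_cls_surj C) as [[a x] ->].
  pose proof (depth_pos X U (proj1_sig x) U_open (proj2_sig x)).
  pose proof (weight_pos a).
  destruct (env_dist_near_cls a x C') as [y [-> Hxy]]; [rewrite H0; nra |].
  rewrite H0 in Hxy; f_equal; f_equal.
  assert (Hd : Defs.dist X (proj1_sig x) (proj1_sig y) = 0).
  { pose proof (dist_nonneg X (proj1_sig x) (proj1_sig y)); nra. }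
  apply Defs.dist_eq0 in Hd; destruct x, y; simpl in Hd; subst.
  apply subset_eq_compat; reflexivity.
Qed.

Lemma env_dist_metric : is_metric env_dist.
Proof.
  pose proof (cone_dist_triangle X _ (depth_bounds X U)) as Htri.
  split; [| split].
  - intros C C'; split; [apply env_dist_eq0 |]; intros <-.
    apply Rle_antisym.
    + apply env_dist_le; intros b; rewrite cone_dist_xx; [lra | apply depth_bounds].
    + pose proof (env_dist_ge C C 0) as Hge.
      rewrite cone_dist_xx in Hge; [lra | apply depth_bounds].
  - intros C C'; apply Rle_antisym; apply env_dist_le; intros b;
      rewrite cone_dist_sym; apply env_dist_ge.
  - intros C1 C2 C3; apply env_dist_le; intros b.
    pose proof (env_dist_ge C1 C2 b); pose proof (env_dist_ge C2 C3 b).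
    pose proof (weight_pos b); pose proof (Htri (slice C1 b) (slice C2 b) (slice C3 b)).
    nra.
Qed.

Lemma env_open_metric_open W : Ue_open Gamma phi U W -> metric_open env_dist W.
Proof.
  intros HW C HC; destruct (Ue_cls_surj C) as [[a x] ->].
  destruct (HW (a, x) HC) as [eps [Heps Hball]].
  pose proof (depth_pos X U (proj1_sig x) U_open (proj2_sig x)).
  pose proof (weight_pos a).
  set (m := Rmin (depth X U (proj1_sig x) / 2) eps).
  assert (Hm : 0 < m) by (apply Rmin_glb_lt; lra).
  assert (m <= depth X U (proj1_sig x) / 2) by apply Rmin_l.
  assert (m <= eps) by apply Rmin_r.
  exists (weight a * m); split; [nra |]; intros C Hlt.
  destruct (env_dist_near_cls a x C) as [y [-> Hxy]]; [nra |].
  apply (Hball (a, y)); simpl; [rewrite Rminus_diag, Rabs_R0; lra | nra].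
Qed.

Hypothesis U_convex : phi_convex Gamma phi U.
Hypothesis closure_compact : mcompact (mclosure U).

Definition psi_continuous_at (t0 : R) (x0 : X) : Prop :=
  forall eps, 0 < eps -> exists delta, 0 < delta /\ forall t y, U y ->
    Rabs (t - t0) < delta -> Defs.dist X x0 y < delta -> cdist (psi t0 x0) (psi t y) < eps.

Lemma flow_preimage_open s x : Gamma s x -> U (phi s x) ->
  exists r, 0 < r /\ forall s' y, Rabs (s' - s) < r -> Defs.dist X x y < r ->
    Gamma s' y /\ U (phi s' y).
Proof.
  intros Gs Us; destruct (U_open _ Us) as [rho [Hrho Hball]].
  destruct (flow_continuous _ _ _ PF s x Gs rho Hrho) as [dc [Hdc Hc]].
  destruct (flow_domain_open _ _ _ PF s x Gs) as [r [Hr Hdom]].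
  exists (Rmin dc r); split; [apply Rmin_glb_lt; auto |]; intros s' y Hs' Hy.
  pose proof (Rmin_l dc r); pose proof (Rmin_r dc r).
  assert (Gs' : Gamma s' y) by (apply Hdom; lra).
  split; [exact Gs' | apply Hball, Hc; auto; lra].
Qed.

Lemma GammaU_tube t0 x0 : GU t0 x0 -> exists delta, 0 < delta /\
  forall t y, Rabs (t - t0) < delta -> Defs.dist X x0 y < delta -> GU t y.
Proof.
  intros [Hx0 HJ].
  destruct (lebesgue_number (Rmin 0 t0) (Rmax 0 t0) (fun s r => forall s' y,
      Rabs (s' - s) < r -> Defs.dist X x0 y < r -> Gamma s' y /\ U (phi s' y)))
    as [d [Hd Hleb]].
  { intros s Hs; apply J_interval, HJ in Hs; destruct Hs as [Gs Us].
    exact (flow_preimage_open s x0 Gs Us). }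
  exists d; split; [exact Hd |]; intros t y Ht Hy.
  assert (Hall : forall s, J t s -> Gamma s y /\ U (phi s y)).
  { intros s Hs; destruct (J_clamp t t0 s Hs) as [s1 [Hs1 Hss1]].
    apply J_interval in Hs1; destruct (Hleb s1 Hs1) as [s2 [r [HP Hr]]].
    pose proof (Rabs_pos (s1 - s2)); pose proof (Rabs_triang (s - s1) (s1 - s2)) as Htri.
    replace (s - s1 + (s1 - s2)) with (s - s2) in Htri by ring.
    apply HP; lra. }
  split; [| exact Hall].
  destruct (Hall 0 (J_0 t)) as [_ Uy]; rewrite (flow_0 _ _ _ PF) in Uy; exact Uy.
Qed.

Lemma closure_flow_time : exists e, 0 < e /\
  forall y, mclosure U y -> forall s, Rabs s < e -> Gamma s y.
Proof.
  assert (Hrad : forall z, exists r, 0 < r /\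
            forall s y, Rabs s < r -> Defs.dist X z y < r -> Gamma s y).
  { intros z; destruct (flow_domain_open _ _ _ PF 0 z (flow_domain_0 _ _ _ PF z))
      as [r [Hr Hball]].
    exists r; split; [exact Hr |]; intros s y Hs Hy.
    apply Hball; [rewrite Rminus_0_r |]; assumption. }
  destruct (choice _ Hrad) as [r Hr].
  destruct (closure_compact X (fun z y => Defs.dist X z y < r z)) as [l Hl].
  - intros z y Hy; exists (r z - Defs.dist X z y); split; [lra |].
    intros y' Hy'; pose proof (Defs.dist_tri X z y y'); lra.
  - intros y _; exists y; rewrite dist_xx; apply Hr.
  - destruct (list_pos_lower_bound l r) as [e [He Hle]]; [intros z _; apply Hr |].
    exists e; split; [exact He |]; intros y Hy s Hs.
    destruct (Hl y Hy) as [z [Hz Hzy]]; pose proof (Hle z Hz).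
    apply (proj2 (Hr z)); lra.
Qed.

Lemma flow_domain_along_closure t0 x0 :
  (forall s, J t0 s -> Gamma s x0 -> mclosure U (phi s x0)) ->
  forall s, J t0 s -> Gamma s x0.
Proof.
  intros Hcl; destruct closure_flow_time as [e [He Hflow]].
  refine (step_induction (e / 2) _ _ _ _); [lra | intros _; apply (flow_domain_0 _ _ _ PF) |].
  intros s u Hu Hue IH Hs.
  assert (Hsu : J t0 (s - u)) by (apply J_iff in Hs; apply J_iff; lra).
  specialize (IH Hsu); replace s with (u + (s - u)) by ring.
  apply (flow_domain_shift _ _ _ PF); [exact IH |].
  apply Hflow; [apply Hcl; assumption | lra].
Qed.

Lemma phi_convex_J t x : U x -> (forall s, J t s -> Gamma s x /\ mclosure U (phi s x)) ->
  U (phi t x) -> forall s, J t s -> U (phi s x).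
Proof.
  intros Hx Hpath Ht.
  destruct (Rle_dec 0 t) as [Htpos | Htneg].
  - intros s Hs; apply J_iff in Hs.
    apply (U_convex t x); auto; [apply Hpath, J_self | | lra].
    intros s' Hs'; apply Hpath, J_iff; lra.
  - apply Rnot_le_lt in Htneg.
    assert (Gt : Gamma t x) by apply Hpath, J_self.
    assert (Hback : forall s, 0 <= s <= - t ->
              Gamma (s + t) x /\ phi s (phi t x) = phi (s + t) x).
    { intros s Hs; assert (Gst : Gamma (s + t) x) by (apply Hpath, J_iff; lra).
      split; [exact Gst | apply (flow_comp _ _ _ PF); assumption]. }
    assert (Hy : forall s, 0 <= s <= - t -> U (phi s (phi t x))).
    { apply (U_convex (- t) (phi t x)); [lra | exact Ht | | |].
      - apply (flow_domain_shift _ _ _ PF _ _ _ Gt).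
        rewrite Rplus_opp_l; apply (flow_domain_0 _ _ _ PF).
      - destruct (Hback (- t)) as [_ ->]; [lra |].
        rewrite Rplus_opp_l, (flow_0 _ _ _ PF); exact Hx.
      - intros s Hs; destruct (Hback s Hs) as [_ ->]; apply Hpath, J_iff; lra. }
    intros s Hs; apply J_iff in Hs.
    destruct (Hback (s - t)) as [_ Heq]; [lra |].
    replace s with (s - t + t) by ring; rewrite <- Heq; apply Hy; lra.
Qed.

Lemma GammaU_exit t0 x0 : U x0 -> ~ GU t0 x0 ->
  (forall s, J t0 s -> Gamma s x0 -> mclosure U (phi s x0)) ->
  Gamma t0 x0 /\ ~ U (phi t0 x0).
Proof.
  intros Hx0 Hng Hcl.
  pose proof (flow_domain_along_closure t0 x0 Hcl) as Hdom.
  split; [apply Hdom, J_self |]; intros Ht0; apply Hng.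
  split; [exact Hx0 |]; intros s Hs; split; [apply Hdom, Hs |].
  apply (phi_convex_J t0 x0 Hx0); [| exact Ht0 | exact Hs].
  intros s' Hs'; split; [apply Hdom, Hs' | apply Hcl; [exact Hs' | apply Hdom, Hs']].
Qed.

Lemma psi_continuous_GammaU t0 x0 : GU t0 x0 -> psi_continuous_at t0 x0.
Proof.
  intros Hg eps Heps.
  destruct (GammaU_tube t0 x0 Hg) as [d [Hd Htube]].
  destruct (flow_continuous _ _ _ PF t0 x0 (GammaU_Gamma _ _ Hg) (eps / 2))
    as [dc [Hdc Hc]]; [lra |].
  exists (Rmin d dc); split; [apply Rmin_glb_lt; auto |]; intros t y _ Ht Hy.
  pose proof (Rmin_l d dc); pose proof (Rmin_r d dc).
  assert (Hgy : GU t y) by (apply Htube; lra).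
  assert (Defs.dist X (phi t0 x0) (phi t y) < eps / 2)
    by (apply Hc; [apply GammaU_Gamma, Hgy | lra | lra]).
  rewrite (psi_Some _ _ Hg), (psi_Some _ _ Hgy).
  eapply Rle_lt_trans; [apply cone_dist_Some_le, depth_lipschitz | lra].
Qed.

Lemma psi_continuous_leaving t0 x0 s : J t0 s -> Gamma s x0 ->
  ~ mclosure U (phi s x0) -> psi_continuous_at t0 x0.
Proof.
  intros Hs Gs Hncl eps Heps.
  destruct (not_mclosure_gap X U _ Hncl) as [eta [Heta Hgap]].
  destruct (flow_continuous _ _ _ PF s x0 Gs eta Heta) as [dc [Hdc Hc]].
  assert (Hnone : forall t y, Rabs (t - t0) < dc -> Defs.dist X x0 y < dc -> ~ GU t y).
  { intros t y Ht Hy [_ HJ].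
    destruct (J_clamp t0 t s Hs) as [s' [Hs' Hss']].
    destruct (HJ s' Hs') as [Gs' Us'].
    rewrite (Rabs_minus_sym t0) in Hss'.
    assert (Hs's : Rabs (s' - s) < dc) by (rewrite Rabs_minus_sym; lra).
    pose proof (Hc s' y Gs' Hs's Hy); pose proof (Hgap _ Us'); lra. }
  rewrite psi_None.
  2: { apply Hnone; [rewrite Rminus_diag, Rabs_R0 | rewrite dist_xx]; exact Hdc. }
  exists dc; split; [exact Hdc |]; intros t y _ Ht Hy.
  rewrite psi_None by (apply Hnone; assumption); simpl; exact Heps.
Qed.

Lemma psi_continuous_exit t0 x0 : Gamma t0 x0 -> ~ U (phi t0 x0) -> psi_continuous_at t0 x0.
Proof.
  intros Gt0 Hout eps Heps.
  assert (Hdepth : depth X U (phi t0 x0) = 0).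
  { destruct (depth_bounds X U (phi t0 x0)) as [[Hlt | Heq] _]; [| auto].
    exfalso; apply Hout, (depth_pos_in X U), Hlt. }
  rewrite psi_None by (intros Hg; apply Hout, GammaU_U, Hg).
  destruct (flow_continuous _ _ _ PF t0 x0 Gt0 eps Heps) as [dc [Hdc Hc]].
  exists dc; split; [exact Hdc |]; intros t y _ Ht Hy.
  unfold psi; destruct excluded_middle_informative as [Hg |]; [| simpl; exact Heps].
  rewrite cone_dist_None_Some.
  pose proof (depth_le_add_dist X U (phi t y) (phi t0 x0)).
  assert (Defs.dist X (phi t0 x0) (phi t y) < eps)
    by (apply Hc; [apply GammaU_Gamma, Hg | exact Ht | exact Hy]).
  rewrite (Defs.dist_sym X (phi t y)) in *; lra.
Qed.

Lemma psi_continuous t0 x0 : U x0 -> psi_continuous_at t0 x0.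
Proof.
  intros Hx0.
  destruct (classic (GU t0 x0)) as [Hg | Hng]; [apply psi_continuous_GammaU, Hg |].
  destruct (classic (exists s, J t0 s /\ Gamma s x0 /\ ~ mclosure U (phi s x0)))
    as [[s (Hs & Gs & Hncl)] | Hstay].
  - exact (psi_continuous_leaving t0 x0 s Hs Gs Hncl).
  - destruct (GammaU_exit t0 x0 Hx0 Hng) as [Gt0 Hout].
    + intros s Hs Gs; apply NNPP; intros Hncl; apply Hstay; exists s; auto.
    + exact (psi_continuous_exit t0 x0 Gt0 Hout).
Qed.

Lemma psi_uniformly_continuous x0 A B eps : U x0 -> 0 < eps ->
  exists delta, 0 < delta /\ forall t0 t y, A <= t0 <= B -> U y ->
    Rabs (t - t0) < delta -> Defs.dist X x0 y < delta -> cdist (psi t0 x0) (psi t y) < eps.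
Proof.
  intros Hx0 Heps.
  destruct (lebesgue_number A B (fun s r => forall t y, U y -> Rabs (t - s) < r ->
      Defs.dist X x0 y < r -> cdist (psi s x0) (psi t y) < eps / 2)) as [d [Hd Hleb]].
  { intros s _; apply (psi_continuous s x0 Hx0); lra. }
  exists d; split; [exact Hd |]; intros t0 t y Ht0 Hy Ht Hxy.
  destruct (Hleb t0 Ht0) as [s [r [HP Hr]]].
  pose proof (Rabs_pos (t0 - s)).
  assert (H1 : cdist (psi s x0) (psi t y) < eps / 2).
  { pose proof (Rabs_triang (t - t0) (t0 - s)) as Htri.
    replace (t - t0 + (t0 - s)) with (t - s) in Htri by ring.
    apply HP; [exact Hy | lra | lra]. }
  assert (H2 : cdist (psi s x0) (psi t0 x0) < eps / 2)
    by (apply HP; [exact Hx0 | lra | rewrite dist_xx; lra]).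
  pose proof (cone_dist_triangle X _ (depth_bounds X U) (psi t0 x0) (psi s x0) (psi t y)).
  rewrite cone_dist_sym in H2; lra.
Qed.

Lemma metric_open_env_open W : metric_open env_dist W -> Ue_open Gamma phi U W.
Proof.
  intros HW [a0 x0] Hp; destruct (HW _ Hp) as [eps [Heps Hball]].
  destruct (psi_uniformly_continuous (proj1_sig x0) (a0 - 4 / eps) (a0 + 4 / eps) (eps / 2)
              (proj2_sig x0)) as [d [Hd Hunif]]; [lra |].
  exists d; split; [exact Hd |]; intros [a y] Ha Hy; simpl in Ha, Hy; apply Hball.
  enough (env_dist (cls (a0, x0)) (cls (a, y)) <= eps / 2) by lra.
  apply env_dist_le; intros b; rewrite !slice_cls; simpl.
  pose proof (weight_pos b); pose proof (weight_le_1 b).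
  pose proof (cone_dist_nonneg X _ (depth_bounds X U)
                (psi (a0 - b) (proj1_sig x0)) (psi (a - b) (proj1_sig y))).
  destruct (Rle_dec (Rabs b) (4 / eps)) as [Hb | Hb].
  - assert (cdist (psi (a0 - b) (proj1_sig x0)) (psi (a - b) (proj1_sig y)) < eps / 2);
      [| nra].
    apply Hunif; [split_min_max_abs; lra | apply (proj2_sig y) | | exact Hy].
    replace (a - b - (a0 - b)) with (a - a0) by ring; exact Ha.
  - pose proof (cone_dist_le_2 X _ (depth_bounds X U)
                  (psi (a0 - b) (proj1_sig x0)) (psi (a - b) (proj1_sig y))).
    assert (weight b < eps / 4); [| nra].
    apply weight_lt; [lra |]; replace (/ (eps / 4)) with (4 / eps) by (field; lra); lra.
Qed.

End Enveloping.

Theorem mainTheorem2 (X : MetricSpace) (Gamma : R -> X -> Prop) (phi : R -> X -> X)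
  (U : X -> Prop) :
  partial_flow Gamma phi ->
  mopen U ->
  phi_convex Gamma phi U ->
  mcompact (mclosure U) ->
  Ue_metrizable Gamma phi U.
Proof.
  intros PF U_open U_convex closure_compact.
  exists (env_dist X Gamma phi U); split.
  - exact (env_dist_metric X Gamma phi U PF U_open).
  - intros W; split.
    + exact (env_open_metric_open X Gamma phi U PF U_open W).
    + exact (metric_open_env_open X Gamma phi U PF U_open U_convex closure_compact W).
Qed.
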